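(* Let $G$ be a Frobenius group whose Frobenius kernel $N$ is elementary abelian of order $p^2$ ($p$ prime) and whose Frobenius complement $C$ has prime order $q$. Then: (1) if $q\nmid p-1$, then $G\in\mathcal{D}_{\frac{p+1}{q}+1}$; (2) if $q\mid p-1$, then either $G\in\mathcal{D}_{p+2}$ (and this always happens when $q=2$) or $G\in\mathcal{D}_{\frac{p-1}{q}+3}$.
   Context: $\mathcal{D}(G)$ denotes the number of conjugacy classes of nontrivial subgroups $H$ of the finite group $G$ with $N_G(H)\neq H$; $\mathcal{D}_n$ is the family of finite groups $G$ with $\mathcal{D}(G)=n$. *)

From mathcomp Require Import all_boot all_fingroup all_solvable.
Set Implicit Arguments. Unset Strict Implicit. Unset Printing Implicit Defensive.
Local Open Scope group_scope.

Definition nonselfnorm_subgroups (gT : finGroupType) (G : {set gT}) : {set {set gT}} :=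
  [set H : {set gT} | [&& group_set H, H \subset G, H != 1 & 'N_G(H) != H]].

Definition Dcount (gT : finGroupType) (G : {set gT}) : nat :=
  #|[set H :^: G | H in nonselfnorm_subgroups G]|.

(* Let S be the set of nontrivial subgroups of G that are not self-normalizing.
   A subgroup H of G not contained in N is self-normalizing: commutation with an
   element y of H outside N is injective on N, so it permutes H :&: N, and any n
   in N normalizing H has [~ y, n] in H :&: N, hence n in H.  So S consists of N
   and its p + 1 subgroups of order p.  In Burnside's count for G acting on S by
   conjugation, elements of N fix all of S and every element outside N generates
   G with N, so it fixes exactly the F members of S normal in G:
   D(G) * q = (p + 2) + (q - 1) * F.
   A normal subgroup X of order p gives a Frobenius group X ><| C, so q | p - 1;
   an involution inverts the abelian kernel; an element normalizing three
   subgroups of order p of N acts on N as a scalar.  Hence F = 1 if q does not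
   divide p - 1, F = p + 2 if q = 2, and otherwise F is 3 or p + 2, the values 1
   and 2 being ruled out by divisibility. *)

From mathcomp Require Import all_boot all_fingroup all_solvable zify.
Set Implicit Arguments. Unset Strict Implicit. Unset Printing Implicit Defensive.
Local Open Scope group_scope.

Definition nonselfnorm_normals (gT : finGroupType) (G : {set gT}) : {set {set gT}} :=
  [set X in nonselfnorm_subgroups G | G \subset 'N(X)].

Lemma acts_nonselfnorm_subgroups (gT : finGroupType) (G : {group gT}) :
  [acts G, on nonselfnorm_subgroups G | 'Js].
Proof.
apply/actsP=> g Gg X; rewrite !inE /= group_setJ conjsg_eq1.
rewrite sub_conjg (conjGid (groupVr Gg)).
by rewrite -{2}(conjGid Gg) normJ -conjIg (inj_eq (@conjsg_inj _ g)).
Qed.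

Lemma pow_cycle_norm (gT : finGroupType) (X : {group gT}) c :
  {in X, forall x, x ^ c \in <[x]>} -> c \in 'N(X).
Proof.
move=> Xc; apply/normP/eqP; rewrite eqEcard cardJg leqnn andbT.
apply/subsetP=> _ /imsetP[x Xx ->].
by apply: subsetP (Xc x Xx); rewrite cycle_subG.
Qed.

Lemma conj_cycle_expg (gT : finGroupType) (a c : gT) k :
  a ^ c = a ^+ k -> {in <[a]>, forall v, v ^ c = v ^+ k}.
Proof. by move=> eac _ /cycleP[i ->]; rewrite conjXg eac -!expgM mulnC. Qed.

Lemma norm_cycle_conj_expg (gT : finGroupType) (a c : gT) :
  c \in 'N(<[a]>) -> exists k, a ^ c = a ^+ k.
Proof. by move=> nac; apply/cycleP; rewrite memJ_norm ?cycle_id. Qed.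

Lemma p2Elem_norm3_p1Elem_conj_cycle (gT : finGroupType) p (A E X Y Z : {group gT}) c :
    E \in 'E_p^2(A) -> X \in 'E_p^1(E) -> Y \in 'E_p^1(E) -> Z \in 'E_p^1(E) ->
    X :!=: Y -> Y :!=: Z -> Z :!=: X ->
    c \in 'N(X) -> c \in 'N(Y) -> c \in 'N(Z) ->
  {in E, forall x, x ^ c \in <[x]>}.
Proof.
(* Writing a generator of Z as a * b in X \x Y, c raises a, b and a * b to
   powers; comparing components in X \x Y shows that the three exponents agree. *)
move=> Ep2E EpX EpY EpZ neXY neYZ neZX nXc nYc nZc.
have [_ defE cYX tiXY] := dprodP (p2Elem_dprodP Ep2E EpX EpY neXY).
have sZE : Z \subset E by case/pnElemP: EpZ.
have [z Zz ntz] := trivgPn _ (nt_pnElem EpZ isT).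
have [a [b [Xa Yb defz]]] : exists a b, [/\ a \in X, b \in Y & z = a * b].
  by move: (subsetP sZE z Zz); rewrite -defE => /mulsgP[a b Xa Yb ->]; exists a, b.
have tiZX : Z :&: X = 1 by apply/(TIp1ElemP EpZ EpX).
have tiZY : Z :&: Y = 1 by apply/(TIp1ElemP EpZ EpY); rewrite eq_sym.
have nta : a != 1.
  apply: contraNneq ntz => a1.
  have: z \in Z :&: Y by rewrite inE Zz defz a1 mul1g.
  by rewrite tiZY => /set1gP->.
have ntb : b != 1.
  apply: contraNneq ntz => b1.
  have: z \in Z :&: X by rewrite inE Zz defz b1 mulg1.
  by rewrite tiZX => /set1gP->.
have prime_p1 P : P \in 'E_p^1(E) -> prime #|P|.
  by move=> EpP; rewrite (card_p1Elem EpP) (pnElem_prime EpP).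
have genX : X :=: <[a]>.
  by apply: (nt_gen_prime (prime_p1 _ EpX)); rewrite !inE nta Xa.
have genY : Y :=: <[b]>.
  by apply: (nt_gen_prime (prime_p1 _ EpY)); rewrite !inE ntb Yb.
have genZ : Z :=: <[z]>.
  by apply: (nt_gen_prime (prime_p1 _ EpZ)); rewrite !inE ntz Zz.
have cXY : {in X & Y, forall u v, commute u v}.
  by move=> u v Xu Yv; apply/esym/(centsP cYX v Yv u Xu).
have [ka eka] : exists k, a ^ c = a ^+ k.
  by apply: norm_cycle_conj_expg; rewrite -genX.
have [kb ekb] : exists k, b ^ c = b ^+ k.
  by apply: norm_cycle_conj_expg; rewrite -genY.
have [k ek] : exists k, z ^ c = z ^+ k.
  by apply: norm_cycle_conj_expg; rewrite -genZ.
have ekk : a ^+ ka * b ^+ kb = a ^+ k * b ^+ k.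
  by rewrite -eka -ekb -conjMg -defz ek defz expgMn //; apply: cXY.
have eak : a ^ c = a ^+ k.
  by rewrite eka -(divgrMid tiXY (groupX ka Xa) (groupX kb Yb)) ekk divgrMid ?groupX.
have ebk : b ^ c = b ^+ k.
  by rewrite ekb -(remgrMid tiXY (groupX ka Xa) (groupX kb Yb)) ekk remgrMid ?groupX.
move=> x; rewrite -defE => /mulsgP[u v Xu Yv ->].
rewrite conjMg (conj_cycle_expg eak) -?genX // (conj_cycle_expg ebk) -?genY //.
by rewrite -expgMn ?mem_cycle //; apply: cXY.
Qed.

Section FrobeniusPrimeIndex.

Variables (gT : finGroupType) (G N C : {group gT}) (q : nat).
Hypotheses (frobG : [Frobenius G = N ><| C]) (pr_q : prime q) (oC : #|C| = q).

Let defG : N ><| C = G. Proof. by case: (Frobenius_context frobG). Qed.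
Let nsNG : N <| G. Proof. by case: (sdprod_context defG). Qed.
Let sNG : N \subset G. Proof. by case/andP: nsNG. Qed.
Let nNG : G \subset 'N(N). Proof. by case/andP: nsNG. Qed.
Let iGN : #|G : N| = q. Proof. by rewrite -(index_sdprod defG). Qed.

Lemma Frobenius_subcent1_notker y : y \in G :\: N -> 'C_N[y] = 1.
Proof.
case/setDP=> Gy notNy; apply/trivgP/subsetP=> k /setIP[Nk cky]; rewrite inE.
apply: contraR notNy => ntk.
have Nk1 : k \in N^# by rewrite !inE ntk.
by apply: (subsetP (Frobenius_cent1_ker frobG Nk1)); rewrite inE Gy cent1C.
Qed.

Lemma Frobenius_commg_inj y : y \in G :\: N -> {in N &, injective (commg y)}.
Proof.
move=> GNy a b Na Nb; rewrite !commgEl => /mulgI eyab.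
have: a * b^-1 \in 'C_N[y].
  rewrite inE groupM ?groupV //= cent1C.
  by apply/cent1P/commgP/conjg_fixP; rewrite conjgM eyab conjgK.
by rewrite Frobenius_subcent1_notker // => /set1gP/eqP; rewrite -eq_mulgV1 => /eqP.
Qed.

Lemma mulg_ker_notsub (H : {group gT}) : H \subset G -> ~~ (H \subset N) -> N * H = G.
Proof.
move=> sHG notsHN; have nNH := subset_trans sHG nNG.
have sNK : N \subset N <*> H := joing_subl N H.
have sKG : N <*> H \subset G by rewrite join_subG sNG.
have /primeP[_ dvd_q] := pr_q.
have /dvd_q/orP[/eqP iKN | /eqP iKN] : #|N <*> H : N| %| q.
  by rewrite -iGN -(Lagrange_index sKG sNK) dvdn_mull.
  by case/negP: notsHN; rewrite (index1g sNK iKN) joing_subr.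
rewrite -norm_joinEr //; apply/eqP; rewrite eqEcard sKG /=.
by rewrite -(Lagrange sNK) iKN -iGN Lagrange.
Qed.

Lemma Frobenius_selfnorm_notsub (H : {group gT}) :
  H \subset G -> ~~ (H \subset N) -> 'N_G(H) = H.
Proof.
move=> sHG notsHN; have [y Hy notNy] := subsetPn notsHN.
have GNy : y \in G :\: N by rewrite inE notNy (subsetP sHG).
have commyN n : n \in N -> [~ y, n] \in N.
  by move=> Nn; rewrite commgEr groupMr // memJ_norm ?groupV ?(subsetP nNG) ?(subsetP sHG).
have commy_onto : [set [~ y, h] | h in H :&: N] = H :&: N.
  apply/eqP; rewrite eqEcard card_in_imset ?leqnn ?andbT; last first.
    by apply: sub_in2 (Frobenius_commg_inj GNy) => h /setIP[].
  by apply/subsetP=> _ /imsetP[h /setIP[Hh Nh] ->]; rewrite inE groupR ?commyN.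
have sNnormH : N :&: 'N(H) \subset H.
  apply/subsetP=> n /setIP[Nn nHn].
  have: [~ y, n] \in H :&: N by rewrite inE commyN // commgEl groupM ?groupV ?memJ_norm.
  by rewrite -commy_onto => /imsetP[h /setIP[Hh Nh] /(Frobenius_commg_inj GNy Nn Nh)->].
apply/eqP; rewrite eqEsubset subsetI sHG normG /=.
rewrite -{1}(mulg_ker_notsub sHG notsHN) setIC -group_modr ?normG //.
by rewrite andbT mul_subG // setIC.
Qed.

Hypothesis cNN : abelian N.

Let sCG : C \subset G. Proof. by case: (sdprod_context defG). Qed.

Lemma mem_nonselfnorm_subgroups X :
  (X \in nonselfnorm_subgroups G) = [&& group_set X, X \subset N & X != 1].
Proof.
rewrite inE; apply/and4P/and3P=> [[gX sXG ntX nXX] | [gX sXN ntX]].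
  split=> //; apply: contraR nXX => notsXN.
  by apply/eqP; apply: (Frobenius_selfnorm_notsub (H := Group gX)).
split=> //; first exact: subset_trans sXN sNG.
apply/eqP=> nXX; have [_ _ _ ltNG _] := Frobenius_context frobG.
have sNX : N \subset X by rewrite -nXX subsetI sNG (sub_abelian_norm cNN).
have eXN : X = N by apply/eqP; rewrite eqEsubset sXN.
by move: nXX ltNG; rewrite eXN (setIidPl nNG) => ->; rewrite properxx.
Qed.

Lemma ker_nonselfnorm_normals : gval N \in nonselfnorm_normals G.
Proof.
have [_ ntN _ _ _] := Frobenius_context frobG.
by rewrite inE mem_nonselfnorm_subgroups groupP subxx ntN nNG.
Qed.

Lemma afix_nonselfnorm_ker a :
  a \in N -> 'Fix_(nonselfnorm_subgroups G | 'Js)[a] = nonselfnorm_subgroups G.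
Proof.
move=> Na; apply/setIidPl/subsetP=> X; rewrite mem_nonselfnorm_subgroups.
by case/and3P=> _ sXN _; apply/afix1P/normP; apply: subsetP (sub_abelian_norm cNN sXN) a Na.
Qed.

Lemma afix_nonselfnorm_notker a :
  a \in G :\: N -> 'Fix_(nonselfnorm_subgroups G | 'Js)[a] = nonselfnorm_normals G.
Proof.
case/setDP=> Ga notNa; apply/setP=> X; rewrite in_setI [in RHS]inE.
apply: andb_id2l; rewrite mem_nonselfnorm_subgroups => /and3P[_ sXN _].
apply/afix1P/idP=> [nXa | nXG]; last by apply/normP; apply: subsetP nXG a Ga.
have defGa : N * <[a]> = G.
  by apply: mulg_ker_notsub; rewrite cycle_subG.
by rewrite -defGa mul_subG ?(sub_abelian_norm cNN) // cycle_subG; apply/normP.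
Qed.

Lemma Dcount_mul_index :
  (Dcount G * q = #|nonselfnorm_subgroups G| + q.-1 * #|nonselfnorm_normals G|)%N.
Proof.
have := Frobenius_Cauchy (acts_nonselfnorm_subgroups G).
rewrite (big_setID N) /= (setIidPr sNG).
under eq_bigr => a Na do rewrite afix_nonselfnorm_ker //.
under [X in _ + X]eq_bigr => a GNa do rewrite afix_nonselfnorm_notker //.
rewrite !sum_nat_const cardsD (setIidPr sNG) -(Lagrange sNG) iGN -/(Dcount G).
rewrite -[X in _ - X]muln1 -mulnBr subn1 -mulnA -mulnDr mulnCA => /eqP.
by rewrite eqn_pmul2l // => /eqP.
Qed.

Lemma nonselfnorm_normals_dvdn X : X \in nonselfnorm_normals G -> (q %| #|X|.-1)%N.
Proof.
rewrite inE mem_nonselfnorm_subgroups => /andP[/and3P[gX sXN ntX] nXG].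
have frobXC := Frobenius_subl (K1 := Group gX) ntX sXN (subset_trans sCG nXG) frobG.
by rewrite -oC (Frobenius_dvd_ker1 frobXC).
Qed.

Lemma nonselfnorm_normalsT :
    (forall X : {group gT}, X \subset N -> C \subset 'N(X)) ->
  nonselfnorm_normals G = nonselfnorm_subgroups G.
Proof.
move=> nXC; apply/setP=> X; rewrite inE andb_idr // mem_nonselfnorm_subgroups.
case/and3P=> gX sXN _; rewrite -(sdprodW defG).
by rewrite mul_subG ?(sub_abelian_norm cNN) // (nXC (Group gX)).
Qed.

Lemma Frobenius_compl2_conj_cycle :
  q = 2 -> {in C & N, forall c x, x ^ c \in <[x]>}.
Proof.
move=> q2 c x Cc Nx; have [-> | ntc] := eqVneq c 1; first by rewrite conjg1 cycle_id.
have GNc : c \in G :\: N.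
  have [_ _ _ tiNC] := sdprodP defG.
  rewrite inE (subsetP sCG) // andbT; apply: contra ntc => Nc.
  by apply/eqP/set1gP; rewrite -tiNC inE Nc.
have Nxc : x ^ c \in N by rewrite memJ_norm ?(subsetP nNG) ?(subsetP sCG).
have cc : c * c = 1 by rewrite -(expg_cardG Cc) oC q2.
(* x * x ^ c is fixed by the involution c, and 'C_N[c] = 1. *)
have xxc : x * x ^ c = 1.
  apply/set1gP; rewrite -(Frobenius_subcent1_notker GNc) inE groupM //=.
  apply/cent1P/commgP/conjg_fixP; rewrite conjMg -conjgM cc conjg1.
  exact: (centsP cNN).
by rewrite -(mulKg x (x ^ c)) xxc mulg1 groupV cycle_id.
Qed.

Lemma nonselfnorm_normals_compl2 :
  q = 2 -> nonselfnorm_normals G = nonselfnorm_subgroups G.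
Proof.
move=> q2; apply: nonselfnorm_normalsT => X sXN; apply/subsetP=> c Cc.
by apply: pow_cycle_norm => x Xx; apply: Frobenius_compl2_conj_cycle; rewrite ?(subsetP sXN).
Qed.

Variable p : nat.
Hypotheses (pr_p : prime p) (abN : p.-abelem N) (oN : #|N| = (p ^ 2)%N).

Let Ep2N : N \in 'E_p^2(N). Proof. by apply/pnElemP; rewrite oN pfactorK. Qed.

Lemma nonselfnorm_subgroups_p2Elem :
  nonselfnorm_subgroups G = gval N |: [set gval P | P in 'E_p^1(N)].
Proof.
have [_ ntN _ _ _] := Frobenius_context frobG.
apply/setP=> X; rewrite mem_nonselfnorm_subgroups !inE.
have [-> | neXN] := eqVneq X N; first by rewrite groupP subxx ntN.
apply/and3P/imsetP=> [[gX sXN ntX] | [P EpP ->]]; last first.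
  by split; [exact: groupP | case/pnElemP: EpP | exact: nt_pnElem EpP _].
exists (Group gX) => //; rewrite p1ElemE // !inE sXN /=.
have: #|X| %| #|N| by apply: (cardSg (H := Group gX)).
rewrite oN => /(dvdn_pfactor _ _ pr_p)[[|[|[|m]]] // _ oX].
- by case/negP: ntX; rewrite -[X]/(gval (Group gX)) trivg_card1 /= oX.
- by rewrite oX.
- by case/negP: neXN; rewrite eqEcard sXN oN oX leqnn.
Qed.

Lemma card_nonselfnorm_p2Elem : #|nonselfnorm_subgroups G| = p.+2.
Proof.
rewrite nonselfnorm_subgroups_p2Elem cardsU1 card_imset; last exact: val_inj.
suff ->: gval N \notin [set gval P | P in 'E_p^1(N)] by rewrite (card_p1Elem_p2Elem Ep2N).
apply/imsetP=> [[P EpP eNP]]; have := card_p1Elem EpP.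
by rewrite -eNP oN -{2}(expn1 p) => /eqP; rewrite eqn_exp2l ?prime_gt1.
Qed.

Lemma nonselfnorm_normalsD1_p1Elem Y :
    Y \in nonselfnorm_normals G :\ gval N ->
  exists2 P : {group gT}, Y = P & P \in 'E_p^1(N) /\ G \subset 'N(P).
Proof.
case/setD1P=> neYN; rewrite inE nonselfnorm_subgroups_p2Elem !inE (negbTE neYN) /=.
by case/andP=> /imsetP[P EpP ->] nPG; exists P.
Qed.

Lemma nonselfnorm_normals_ndvdn :
  ~~ (q %| p.-1)%N -> nonselfnorm_normals G = [set gval N].
Proof.
move=> ndvd_q; apply/setP=> Y; rewrite in_set1; apply/idP/eqP=> [SY | ->]; last first.
  exact: ker_nonselfnorm_normals.
apply/eqP; apply: contraR ndvd_q => neYN.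
have SYN : Y \in nonselfnorm_normals G :\ gval N by apply/setD1P.
have [P eYP [EpP _]] := nonselfnorm_normalsD1_p1Elem SYN.
by rewrite -(card_p1Elem EpP) nonselfnorm_normals_dvdn -?eYP.
Qed.

Lemma nonselfnorm_normals_gt3 :
  3 < #|nonselfnorm_normals G| -> nonselfnorm_normals G = nonselfnorm_subgroups G.
Proof.
rewrite (cardsD1 (gval N)) ker_nonselfnorm_normals ltnS => /card_gt2P.
case=> _ [_ [_ [[/nonselfnorm_normalsD1_p1Elem[X -> [EpX nXG]]
                 /nonselfnorm_normalsD1_p1Elem[Y -> [EpY nYG]]
                 /nonselfnorm_normalsD1_p1Elem[Z -> [EpZ nZG]]] [neXY neYZ neZX]]]].
apply: nonselfnorm_normalsT => H sHN; apply/subsetP=> c Cc.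
have Gc := subsetP sCG c Cc.
apply: pow_cycle_norm => x Hx.
apply: (p2Elem_norm3_p1Elem_conj_cycle Ep2N EpX EpY EpZ) (subsetP sHN x Hx);
  by rewrite ?(subsetP nXG) ?(subsetP nYG) ?(subsetP nZG).
Qed.

End FrobeniusPrimeIndex.

Lemma Dcount_arith_all q n D : 0 < q -> (D * q = n + q.-1 * n)%N -> D = n.
Proof.
move=> q_gt0; rewrite -mulSn prednK // mulnC => /eqP.
by rewrite eqn_pmul2l // => /eqP.
Qed.

Lemma Dcount_arith_one q m D : 0 < q -> (D * q = m.+1 + q.-1 * 1)%N -> D = (m %/ q).+1.
Proof.
move=> q_gt0; rewrite muln1 addSn -addnS prednK // => eqDq.
by rewrite -(mulnK D q_gt0) eqDq addnC -{1}[q]mul1n divnMDl.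
Qed.

Lemma Dcount_arith_three p q D :
  0 < p -> 0 < q -> (D * q = p.+2 + q.-1 * 3)%N -> D = (p.-1 %/ q + 3)%N.
Proof.
move=> p_gt0 q_gt0 eqDq; rewrite -(mulnK D q_gt0) eqDq.
have ->: (p.+2 + q.-1 * 3 = 3 * q + p.-1)%N by lia.
by rewrite divnMDl // addnC.
Qed.

Lemma Dcount_arith_lt3 p q D F :
    0 < p -> 2 < q -> (q %| p.-1)%N -> (D * q = p.+2 + q.-1 * F)%N -> 0 < F < 3 ->
  False.
Proof.
move=> p_gt0 q_gt2 dvd_q eqDq /andP[F_gt0 F_lt3].
have: (q %| p.+2 + q.-1 * F)%N by rewrite -eqDq dvdn_mull.
case: F F_gt0 F_lt3 {eqDq} => [|[|[|F]]] // _ _.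
- have ->: (p.+2 + q.-1 * 1 = p.-1 + q + 2)%N by lia.
  by rewrite (dvdn_addr _ (dvdn_add dvd_q (dvdnn q))) => /dvdn_leq; lia.
- have ->: (p.+2 + q.-1 * 2 = p.-1 + q * 2 + 1)%N by lia.
  by rewrite (dvdn_addr _ (dvdn_add dvd_q (dvdn_mulr 2 (dvdnn q)))) => /dvdn_leq; lia.
Qed.

Theorem mainTheorem9 (gT : finGroupType) (G N C : {group gT}) (p q : nat) :
  prime p -> prime q ->
  [Frobenius G = N ><| C] ->
  p.-abelem N -> #|N| = (p ^ 2)%N ->
  #|C| = q ->
  (~~ (q %| p.-1)%N -> Dcount G = ((p.+1) %/ q).+1) /\
  ((q %| p.-1)%N ->
     (Dcount G = p + 2 \/ Dcount G = (p.-1 %/ q) + 3) /\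
     (q = 2 -> Dcount G = p + 2)).
Proof.
move=> pr_p pr_q frobG abN oN oC; have cNN := abelem_abelian abN.
have [p_gt0 q_gt0] := (prime_gt0 pr_p, prime_gt0 pr_q).
have countD := Dcount_mul_index frobG pr_q oC cNN.
rewrite (card_nonselfnorm_p2Elem frobG pr_q oC cNN pr_p abN oN) in countD.
have DcountT : nonselfnorm_normals G = nonselfnorm_subgroups G -> Dcount G = p + 2.
  move=> eqS; rewrite eqS (card_nonselfnorm_p2Elem frobG pr_q oC cNN pr_p abN oN) in countD.
  by rewrite (Dcount_arith_all q_gt0 countD) addn2.
split=> [ndvd_q | dvd_q].
  rewrite (nonselfnorm_normals_ndvdn frobG pr_q oC cNN pr_p oN ndvd_q) cards1 in countD.
  exact: Dcount_arith_one q_gt0 countD.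
have [q2 | neq2] := eqVneq q 2.
  by rewrite DcountT ?(nonselfnorm_normals_compl2 frobG pr_q oC cNN q2); split; [left |].
split=> [|/eqP]; last by rewrite (negbTE neq2).
have [gt3 | le3] := ltnP 3 #|nonselfnorm_normals G|.
  by left; apply/DcountT/(nonselfnorm_normals_gt3 frobG pr_q oC cNN pr_p abN oN).
right; have [eq3 | ne3] := eqVneq #|nonselfnorm_normals G| 3.
  by rewrite eq3 in countD; exact: Dcount_arith_three p_gt0 q_gt0 countD.
have q_gt2 : 2 < q by rewrite ltn_neqAle eq_sym neq2 prime_gt1.
case: (Dcount_arith_lt3 p_gt0 q_gt2 dvd_q countD).
rewrite [_ < 3]ltn_neqAle ne3 le3 !andbT; apply/card_gt0P.
by exists (gval N); apply: ker_nonselfnorm_normals frobG pr_q oC cNN.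
Qed.
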